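(* Let $H \in \mathcal{M}_n(\mathbb{C})$ be a positive semidefinite matrix whose least eigenvalue is simple. Then $H$ has exactly $k$ distinct eigenvalues, where $2 \le k \le n$, if and only if there are $k$ distinct real numbers $\mu_1, \ldots, \mu_k$ such that (i) $H - \mu_i I$ is a singular matrix for every $1 \le i \le k-1$; and (ii) $\prod_{i=1}^{k-1}(H - \mu_i I) = \frac{\prod_{i=1}^{k-1}(\mu_k - \mu_i)}{\|\alpha\|_2^2}\,\alpha\alpha^\ast$ and $H\alpha = \mu_k\alpha$ for some $\alpha \in \mathbb{C}^n\setminus\{\mathbf{0}\}$. Moreover, in this case $\mu_1, \ldots, \mu_k$ are exactly the $k$ distinct eigenvalues of $H$.
   Context: $\mathcal{M}_n(\mathbb{C})$ is the set of $n\times n$ complex matrices, $I$ the identity matrix, $\alpha^\ast = \overline{\alpha}^T$ and $\|\alpha\|_2^2 = \alpha^\ast\alpha$. A simple eigenvalue is one of algebraic multiplicity $1$. *)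

From HB Require Import structures.
From mathcomp Require Import all_boot all_order all_algebra.
Set Implicit Arguments. Unset Strict Implicit. Unset Printing Implicit Defensive.
Import Order.TTheory GRing.Theory Num.Theory.
Local Open Scope ring_scope.

(* The complex field is an arbitrary numClosedFieldType C
   (e.g. algC, or R[i] for R : realType); conjugation is Num.conj. *)

Definition ctrmx (C : numClosedFieldType) m n (A : 'M[C]_(m, n)) : 'M[C]_(n, m) :=
  (map_mx Num.conj A)^T.

Definition hermitianmx (C : numClosedFieldType) n (H : 'M[C]_n) : Prop :=
  ctrmx H = H.

Definition psdmx (C : numClosedFieldType) n (H : 'M[C]_n) : Prop :=
  hermitianmx H /\ forall x : 'cV[C]_n, 0 <= (ctrmx x *m H *m x) ord0 ord0.

Definition sqnorm2 (C : numClosedFieldType) n (a : 'cV[C]_n) : C :=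
  (ctrmx a *m a) ord0 ord0.

(* the least eigenvalue of H exists and is simple
   (algebraic multiplicity 1 = multiplicity as a root of char_poly) *)
Definition least_eig_simple (C : numClosedFieldType) n (H : 'M[C]_n) : Prop :=
  exists lam : C, [/\ eigenvalue H lam,
                      (forall mu, eigenvalue H mu -> lam <= mu) &
                      mup lam (char_poly H) = 1%N].

Definition num_distinct_eigs (C : numClosedFieldType) n (H : 'M[C]_n) (k : nat) : Prop :=
  exists s : seq C, [/\ uniq s, size s = k & forall x, eigenvalue H x <-> x \in s].

From HB Require Import structures.
From mathcomp Require Import all_boot all_order all_algebra.
From mathcomp Require Import sesquilinear spectral.
Import Order.TTheory GRing.Theory Num.Theory.
Set Implicit Arguments.
Unset Strict Implicit.
Unset Printing Implicit Defensive.
Local Open Scope ring_scope.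

(* Only two facts about H are used: it is unitarily diagonalizable with a real
   spectrum, and the eigenvalue mu_k has algebraic multiplicity one.
   If H = U^* diag(d) U with U unitary, then prod_{i<k}(H - mu_i) is
   U^* diag(prod_i (d_j - mu_i)) U, which kills every diagonal entry except the
   single one equal to mu_k; this is the rank-one formula, with alpha the
   corresponding (unit) column of U^*.  Conversely, a left eigenvector v for an
   eigenvalue x outside {mu_i} is orthogonal to the right eigenvector alpha, so
   v prod_i (H - mu_i) = prod_i (x - mu_i) v vanishes, forcing v = 0. *)

Lemma mem_mkseqP (T : eqType) (f : nat -> T) n x :
  reflect (exists2 i, (i < n)%N & x = f i) (x \in mkseq f n).
Proof.
by apply: (iffP mapP) => -[i]; rewrite ?mem_iota /= ?add0n => ilt ->; exists i;
  rewrite ?mem_iota.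
Qed.

Lemma count_codom (T : finType) (T' : eqType) (f : T -> T') y :
  count_mem y (codom f) = #|[pred x | f x == y]|.
Proof. by rewrite codomE count_map cardE -size_filter enumT /enum_mem. Qed.

Section RemLast.

Variables (T : eqType) (s : seq T) (x : T).
Hypotheses (s_uniq : uniq s) (x_in_s : x \in s).

Lemma nth_rem_last : nth x (rem x s) (size s).-1 = x.
Proof. by rewrite nth_default // size_rem. Qed.

Lemma mem_nth_rem i : nth x (rem x s) i \in s.
Proof.
have [i_lt|i_ge] := ltnP i (size (rem x s)); last by rewrite nth_default.
exact/mem_rem/mem_nth.
Qed.

Lemma nth_rem_inj : {in gtn (size s) &, injective (nth x (rem x s))}.
Proof.
have s_gt0 : (0 < size s)%N by case: s x_in_s.
apply/mkseq_uniqP; rewrite -(prednK s_gt0) -(size_rem x_in_s).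
by rewrite mkseqS mkseq_nth nth_default // rcons_uniq mem_rem_uniqF ?rem_uniq.
Qed.

Lemma nth_rem_index y : y \in s -> y != x ->
  exists2 i, (i < (size s).-1)%N & nth x (rem x s) i = y.
Proof.
move=> y_in_s y_neq_x.
have y_in_rem : y \in rem x s by rewrite mem_rem_uniq // inE y_neq_x.
by exists (index y (rem x s)); rewrite ?nth_index // -(size_rem x_in_s) index_mem.
Qed.

End RemLast.

Lemma eigenvalueE (F : fieldType) n (A : 'M[F]_n) a :
  eigenvalue A a = (\det (A - a%:M) == 0).
Proof.
by rewrite /eigenvalue /eigenspace kermx_eq0 row_free_unit unitmxE unitfE negbK.
Qed.

Lemma eigenvalue_col (F : fieldType) n (A : 'M[F]_n) (alpha : 'cV_n) a :
  alpha != 0 -> A *m alpha = a *: alpha -> eigenvalue A a.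
Proof.
move=> alpha_neq0 A_alpha; rewrite eigenvalueE -[_ == 0]negbK -unitfE -unitmxE.
apply: contra alpha_neq0 => unit_A.
by rewrite -(mulKmx unit_A alpha) mulmxBl A_alpha mul_scalar_mx subrr mulmx0.
Qed.

Lemma left_right_eigenvector_orth (F : fieldType) n (A : 'M[F]_n)
    (v : 'rV_n) (alpha : 'cV_n) x y :
  v *m A = x *: v -> A *m alpha = y *: alpha -> x != y -> v *m alpha = 0.
Proof.
move=> vA A_alpha x_neq_y.
have : (x - y) *: (v *m alpha) = 0.
  by rewrite scalerBl scalemxAl -vA -mulmxA A_alpha -scalemxAr subrr.
by move/eqP; rewrite scaler_eq0 subr_eq0 (negbTE x_neq_y) => /eqP.
Qed.

Lemma left_eigenvector_prod (R : comPzRingType) n (A : 'M[R]_n) (v : 'rV_n) x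
    (a : nat -> R) m :
  v *m A = x *: v ->
  v *m \prod_(0 <= i < m) (A - (a i)%:M) = (\prod_(0 <= i < m) (x - a i)) *: v.
Proof.
move=> vA; elim: m => [|m IHm]; first by rewrite !big_geq // scale1r mulmx1.
rewrite !big_nat_recr //= -mulmxE mulmxA IHm -scalemxAl mulmxBr vA.
by rewrite mul_mx_scalar -scalerBl scalerA.
Qed.

Lemma eigenvalue_rank_one_prod (F : fieldType) n (A : 'M[F]_n) (mu : nat -> F) m
    (alpha : 'cV_n) (beta : 'rV_n) c :
  (forall i, (i < m)%N -> eigenvalue A (mu i)) ->
  alpha != 0 -> A *m alpha = mu m *: alpha ->
  \prod_(0 <= i < m) (A - (mu i)%:M) = c *: (alpha *m beta) ->
  forall x, eigenvalue A x = (x \in mkseq mu m.+1).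
Proof.
move=> mu_eig alpha_neq0 A_alpha A_prod x; apply/idP/idP; last first.
  case/mem_mkseqP=> i; rewrite ltnS leq_eqVlt => /orP[/eqP-> ->|/mu_eig mu_i ->] //.
  exact: eigenvalue_col A_alpha.
case/eigenvalueP=> v vA; apply: contraLR => x_notin.
have x_neq_mu i : (i <= m)%N -> x != mu i.
  by move=> i_le; apply: contraNneq x_notin => ->; apply/mem_mkseqP; exists i.
have v_alpha := left_right_eigenvector_orth vA A_alpha (x_neq_mu m (leqnn m)).
have prod_neq0 : \prod_(0 <= i < m) (x - mu i) != 0.
  rewrite prodf_seq_neq0; apply/allP => i; rewrite mem_index_iota subr_eq0.
  by case/andP=> _ /ltnW/x_neq_mu.
have prod_v : (\prod_(0 <= i < m) (x - mu i)) *: v = 0.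
  rewrite -(left_eigenvector_prod _ _ vA) A_prod -scalemxAr mulmxA v_alpha.
  by rewrite mul0mx scaler0.
by rewrite negbK; apply/eqP/(scalerI prod_neq0); rewrite prod_v scaler0.
Qed.

Section ConjugateDiagonal.

Variables (F : fieldType) (n : nat) (P Q : 'M[F]_n) (d : 'rV[F]_n).
Hypothesis QP : Q *m P = 1%:M.

Lemma conj_diag_subr x :
  Q *m diag_mx d *m P - x%:M = Q *m diag_mx (d - const_mx x) *m P.
Proof.
rewrite linearB /= diag_const_mx mulmxBr mulmxBl mul_mx_scalar -scalemxAl.
by rewrite QP scalemx1.
Qed.

Lemma char_poly_conj_diag :
  char_poly (Q *m diag_mx d *m P) = \prod_(y <- codom (d 0)) ('X - y%:P).
Proof.
have QP_poly : map_mx polyC Q *m map_mx polyC P = 1%:M.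
  by rewrite -map_mxM QP map_mx1.
rewrite /char_poly.
have -> : char_poly_mx (Q *m diag_mx d *m P) =
          map_mx polyC Q *m char_poly_mx (diag_mx d) *m map_mx polyC P.
  rewrite /char_poly_mx mulmxBr mulmxBl !map_mxM mul_mx_scalar -scalemxAl.
  by rewrite QP_poly scalemx1.
rewrite !det_mulmx mulrAC -det_mulmx QP_poly det1 mul1r -/(char_poly _).
rewrite char_poly_trig ?diag_mx_is_trig // codomE big_map big_enum /=.
by apply: eq_bigr => j _; rewrite mxE eqxx mulr1n.
Qed.

Lemma eigenvalue_conj_diag x :
  eigenvalue (Q *m diag_mx d *m P) x = (x \in codom (d 0)).
Proof. by rewrite eigenvalue_root_char char_poly_conj_diag root_prod_XsubC. Qed.

Lemma mup_conj_diag x :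
  mup x (char_poly (Q *m diag_mx d *m P)) = #|[pred j | d 0 j == x]|.
Proof. by rewrite char_poly_conj_diag mu_prod_XsubC count_codom. Qed.

Hypothesis PQ : P *m Q = 1%:M.

Lemma prod_conj_diag (a : nat -> F) m :
  \prod_(0 <= i < m) (Q *m diag_mx d *m P - (a i)%:M) =
  Q *m diag_mx (\row_j \prod_(0 <= i < m) (d 0 j - a i)) *m P.
Proof.
elim: m => [|m IHm].
  rewrite big_geq // (_ : \row_j _ = const_mx 1).
    by rewrite diag_const_mx mul_mx_scalar scale1r QP.
  by apply/rowP=> j; rewrite !mxE big_geq.
rewrite big_nat_recr //= IHm conj_diag_subr -mulmxE !mulmxA -(mulmxA _ P) PQ mulmx1.
rewrite -(mulmxA Q) mulmx_diag; congr (Q *m diag_mx _ *m P).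
by apply/rowP=> j; rewrite !mxE big_nat_recr //= !mxE.
Qed.

Lemma conj_diag_mul_col j : Q *m diag_mx d *m P *m col j Q = d 0 j *: col j Q.
Proof.
rewrite colE -!mulmxA (mulmxA P) PQ mul1mx scalemxAr; congr (Q *m _).
apply/matrixP=> a b; rewrite mul_diag_mx !mxE.
by case: eqP => [->|]; rewrite ?mulr1 ?mulr0.
Qed.

Lemma prod_conj_diag_rank_one (a : nat -> F) m j0 :
  (forall j, j != j0 -> exists2 i, (i < m)%N & a i = d 0 j) ->
  \prod_(0 <= i < m) (Q *m diag_mx d *m P - (a i)%:M) =
  (\prod_(0 <= i < m) (d 0 j0 - a i)) *: (col j0 Q *m row j0 P).
Proof.
move=> a_covers; rewrite prod_conj_diag.
set c := \prod_(0 <= i < m) (d 0 j0 - a i).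
suff -> : diag_mx (\row_j \prod_(0 <= i < m) (d 0 j - a i)) = c *: delta_mx j0 j0.
  rewrite -scalemxAr -scalemxAl colE rowE mulmxA; congr (_ *: _).
  by rewrite -(mulmxA Q (delta_mx j0 0)) mul_delta_mx.
apply/matrixP=> j l; rewrite !mxE.
have [<-|j_neq_l] := eqVneq j l; last first.
  rewrite mulr0n; case: eqVneq => [j_eq_j0|_] /=; last by rewrite mulr0n mulr0.
  by rewrite -j_eq_j0 eq_sym (negbTE j_neq_l) mulr0n mulr0.
rewrite !mulr1n; have [->|j_neq_j0] := eqVneq j j0; first by rewrite mulr1.
rewrite mulr0; have [i i_lt <-] := a_covers j j_neq_j0.
apply/eqP; rewrite prodf_seq_eq0; apply/hasP; exists i; first by rewrite mem_index_iota.
by rewrite subrr eqxx.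
Qed.

End ConjugateDiagonal.

Lemma ctrmxK (C : numClosedFieldType) m n (A : 'M[C]_(m, n)) : ctrmx (ctrmx A) = A.
Proof. by apply/matrixP=> i j; rewrite !mxE conjCK. Qed.

Lemma ctrmx_col (C : numClosedFieldType) m n (A : 'M[C]_(m, n)) j :
  ctrmx (col j A) = row j (ctrmx A).
Proof. by apply/matrixP=> i l; rewrite !mxE. Qed.

Lemma sqnorm2_col_ctrmx (C : numClosedFieldType) n (U : 'M[C]_n) j :
  U *m ctrmx U = 1%:M -> sqnorm2 (col j (ctrmx U)) = 1.
Proof.
move=> U_unitary; have <- : (U *m ctrmx U) j j = 1 by rewrite U_unitary mxE eqxx.
rewrite /sqnorm2 ctrmx_col ctrmxK !mxE.
by apply: eq_bigr => l _; rewrite !mxE.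
Qed.

Lemma hermitian_unitary_diag (C : numClosedFieldType) n (H : 'M[C]_n) :
  ctrmx H = H ->
  exists (U : 'M[C]_n) (d : 'rV[C]_n),
    [/\ U *m ctrmx U = 1%:M, ctrmx U *m U = 1%:M,
        H = ctrmx U *m diag_mx d *m U & forall j, d 0 j \is Num.real].
Proof.
move=> H_herm.
have ctrmx_tC m p (A : 'M[C]_(m, p)) : ctrmx A = (A ^t* )%sesqui.
  by rewrite /ctrmx map_trmx.
have H_hermsym : H \is hermsymmx.
  by apply/is_hermitianmxP; rewrite expr0 scale1r -ctrmx_tC H_herm.
have /orthomx_spectralP H_spectral := hermitian_normalmx H_hermsym.
have U_unitary := spectral_unitarymx H.
exists (spectralmx H), (spectral_diag H); rewrite !ctrmx_tC; split.
- exact/unitarymxP.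
- by rewrite -invmx_unitary // mulVmx // spectral_unit.
- by rewrite -invmx_unitary.
- by move=> j; have /mxOverP := hermitian_spectral_diag_real H_hermsym; apply.
Qed.

Definition rank_one_eigen_factorization (C : numClosedFieldType) n (H : 'M[C]_n)
    k (mu : nat -> C) : Prop :=
  exists alpha : 'cV[C]_n,
    [/\ alpha != 0,
        \prod_(0 <= i < k.-1) (H - (mu i)%:M)
          = ((\prod_(0 <= i < k.-1) (mu k.-1 - mu i)) / sqnorm2 alpha)
              *: (alpha *m ctrmx alpha) &
        H *m alpha = mu k.-1 *: alpha].

Lemma simple_eigenvalue_rank_one_factorization (C : numClosedFieldType) n
    (H : 'M[C]_n) k (s : seq C) lam :
  ctrmx H = H -> uniq s -> size s = k -> (forall x, eigenvalue H x <-> x \in s) ->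
  eigenvalue H lam -> mup lam (char_poly H) = 1%N ->
  exists mu : nat -> C,
    [/\ forall i, (i < k)%N -> mu i \is Num.real,
        forall i j, (i < k)%N -> (j < k)%N -> mu i = mu j -> i = j,
        forall i, (i < k.-1)%N -> \det (H - (mu i)%:M) = 0 &
        rank_one_eigen_factorization H k mu].
Proof.
move=> H_herm s_uniq s_size H_eig lam_eig lam_simple; subst k.
have [U [d [UU' U'U H_diag d_real]]] := hermitian_unitary_diag H_herm.
subst H; set V := ctrmx U in UU' U'U H_eig lam_eig lam_simple *.
have [j0 d_eq_lam] : exists j0, [pred j | d 0 j == lam] =i pred1 j0.
  by apply/card1P; rewrite -(mup_conj_diag d U'U) lam_simple.
have d_eq_lamE j : (d 0 j == lam) = (j == j0) by exact: d_eq_lam j.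
have d_j0 : d 0 j0 = lam by apply/eqP; rewrite d_eq_lamE.
have lam_s : lam \in s by apply/H_eig.
pose mu := nth lam (rem lam s).
have mu_last : mu (size s).-1 = lam := nth_rem_last lam_s.
have mu_eig i : eigenvalue (V *m diag_mx d *m U) (mu i) by apply/H_eig/mem_nth_rem.
exists mu; split.
- by move=> i _; move: (mu_eig i); rewrite (eigenvalue_conj_diag d U'U) => /codomP[j ->].
- by move=> i j i_lt j_lt; apply: nth_rem_inj.
- by move=> i _; apply/eqP; rewrite -eigenvalueE.
have alpha_unit := sqnorm2_col_ctrmx j0 UU'.
exists (col j0 V); rewrite alpha_unit divr1 mu_last; split.
- by apply: contra_eq_neq alpha_unit => ->; rewrite /sqnorm2 mulmx0 mxE eq_sym oner_neq0.
- rewrite (prod_conj_diag_rank_one U'U UU' (j0 := j0)) ?d_j0 ?ctrmx_col ?ctrmxK //.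
  move=> j j_neq_j0; apply: nth_rem_index => //; last by rewrite d_eq_lamE.
  by apply/H_eig; rewrite (eigenvalue_conj_diag d U'U) codom_f.
- by rewrite (conj_diag_mul_col d UU') d_j0.
Qed.

(* mu_1, ..., mu_k of the paper are mu 0, ..., mu (k-1); mu_k = mu k.-1. *)
Theorem lemma4p1 (C : numClosedFieldType) (n : nat) (H : 'M[C]_n)
    (HH : psdmx H) (Hleast : least_eig_simple H) (k : nat)
    (Hk : (2 <= k <= n)%N) :
  (num_distinct_eigs H k <->
   exists mu : nat -> C,
     [/\ (forall i, (i < k)%N -> mu i \is Num.real),
         (forall i j, (i < k)%N -> (j < k)%N -> mu i = mu j -> i = j),
         (forall i, (i < k.-1)%N -> \det (H - (mu i)%:M) = 0) &
         exists alpha : 'cV[C]_n,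
           [/\ alpha != 0,
               \prod_(0 <= i < k.-1) (H - (mu i)%:M)
                 = ((\prod_(0 <= i < k.-1) (mu k.-1 - mu i)) / sqnorm2 alpha)
                     *: (alpha *m ctrmx alpha) &
               H *m alpha = mu k.-1 *: alpha]])
  /\
  (forall mu : nat -> C,
     (forall i, (i < k)%N -> mu i \is Num.real) ->
     (forall i j, (i < k)%N -> (j < k)%N -> mu i = mu j -> i = j) ->
     (forall i, (i < k.-1)%N -> \det (H - (mu i)%:M) = 0) ->
     (exists alpha : 'cV[C]_n,
        [/\ alpha != 0,
            \prod_(0 <= i < k.-1) (H - (mu i)%:M)
              = ((\prod_(0 <= i < k.-1) (mu k.-1 - mu i)) / sqnorm2 alpha)
                  *: (alpha *m ctrmx alpha) &
            H *m alpha = mu k.-1 *: alpha]) ->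
     forall x, eigenvalue H x <-> exists2 i, (i < k)%N & x = mu i).
Proof.
have k_gt0 : (0 < k)%N by case/andP: Hk => /ltnW.
have eigenvalue_mu mu : (forall i, (i < k.-1)%N -> \det (H - (mu i)%:M) = 0) ->
    rank_one_eigen_factorization H k mu ->
    forall x, eigenvalue H x = (x \in mkseq mu k).
  move=> mu_det [alpha [alpha_neq0 H_prod H_alpha]] x; rewrite -(prednK k_gt0).
  apply: eigenvalue_rank_one_prod H_alpha H_prod x => // i /mu_det/eqP.
  by rewrite eigenvalueE.
split; last first.
  by move=> mu _ _ mu_det mu_fact x; rewrite (eigenvalue_mu mu mu_det mu_fact); split=> /mem_mkseqP.
split.
  case=> s [s_uniq s_size H_eig]; have [lam [lam_eig _ lam_simple]] := Hleast.
  exact: simple_eigenvalue_rank_one_factorization (proj1 HH) s_uniq s_size H_eig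
    lam_eig lam_simple.
case=> mu [_ mu_inj mu_det mu_fact]; exists (mkseq mu k); split.
- by apply/mkseq_uniqP => i j; exact: mu_inj.
- exact: size_mkseq.
- by move=> x; rewrite (eigenvalue_mu mu mu_det mu_fact).
Qed.
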